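(* Let $A$ be an algebra such that $\nabla_A\in\mathcal K(A)$ and the commutator of $A$ is distributive w.r.t. the join. Let $\theta\in\mathrm{Con}(A)$ and $\phi\in V_A(\theta)$. Then $\phi$ is a minimal element of $(V_A(\theta),\subseteq)$ if and only if $\nabla_A\setminus\phi$ is a maximal element (w.r.t. inclusion) of the set of $m$-systems of $A$ that are disjoint from $\theta$.
   Context: Let $A$ be an algebra of a fixed signature. $\mathrm{Con}(A)$ is the lattice of congruences of $A$ with bottom $\Delta_A$ and top $\nabla_A=A^2$; $\mathcal K(A)$ is the set of finitely generated (compact) congruences; $Cg_A(a,b)$ is the congruence generated by $(a,b)$. $[\cdot,\cdot]_A$ is the term condition commutator: for $\alpha,\beta,\mu\in\mathrm{Con}(A)$, $C(\alpha,\beta;\mu)$ means that for all $n,k$, every $(n+k)$-ary term $t$, all $(a_i,b_i)\in\alpha$ and $(c_j,d_j)\in\beta$: $(t(\bar a,\bar c),t(\bar a,\bar d))\in\mu$ iff $(t(\bar b,\bar c),t(\bar b,\bar d))\in\mu$; $[\alpha,\beta]_A=\bigcap\{\mu: C(\alpha,\beta;\mu)\}$. ''Distributive w.r.t. the join'' means $[\alpha\vee\beta,\gamma]_A=[\alpha,\gamma]_A\vee[\beta,\gamma]_A$ and $[\gamma,\alpha\vee\beta]_A=[\gamma,\alpha]_A\vee[\gamma,\beta]_A$. A congruence $\phi\neq\nabla_A$ is prime if $[\alpha,\beta]_A\subseteq\phi$ implies $\alpha\subseteq\phi$ or $\beta\subseteq\phi$; $\mathrm{Spec}(A)$ is the set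 of prime congruences and $V_A(\theta)=\{\phi\in\mathrm{Spec}(A):\theta\subseteq\phi\}$. A subset $S\subseteq A^2$ is an $m$-system iff for all $(a,b),(c,d)\in S$, $[Cg_A(a,b),Cg_A(c,d)]_A\cap S\neq\emptyset$. *)

From mathcomp Require Import all_boot.
Set Implicit Arguments. Unset Strict Implicit. Unset Printing Implicit Defensive.

Record signature := Signature { sym : Type; arity : sym -> nat }.

Record algebra (sg : signature) := Algebra {
  carrier :> Type;
  ops : forall f : sym sg, ('I_(arity f) -> carrier) -> carrier }.

Inductive term (sg : signature) (n : nat) : Type :=
| Var of 'I_n
| App (f : sym sg) of ('I_(arity f) -> term sg n).

Fixpoint eval (sg : signature) (A : algebra sg) (n : nat) (v : 'I_n -> A)
  (t : term sg n) : A :=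
  match t with
  | Var i => v i
  | App f ts => ops (fun j => eval v (ts j))
  end.

Section Congruences.
Variables (sg : signature) (A : algebra sg).

Definition brel := A -> A -> Prop.

Definition subrel (r s : brel) : Prop := forall x y, r x y -> s x y.
Definition eqrel (r s : brel) : Prop := forall x y, r x y <-> s x y.

Definition nablaA : brel := fun _ _ => True.

Definition is_congruence (r : brel) : Prop :=
  (forall x, r x x) /\ (forall x y, r x y -> r y x) /\
  (forall x y z, r x y -> r y z -> r x z) /\
  (forall (f : sym sg) (u v : 'I_(arity f) -> A),
      (forall i, r (u i) (v i)) -> r (ops u) (ops v)).

Definition Cg_set (S : brel) : brel :=
  fun x y => forall mu, is_congruence mu -> subrel S mu -> mu x y.

Definition Cg (a b : A) : brel := Cg_set (fun x y => x = a /\ y = b).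

Definition cjoin (al be : brel) : brel := Cg_set (fun x y => al x y \/ be x y).

Fixpoint inlist (T : Type) (p : T) (s : seq T) : Prop :=
  match s with [::] => False | q :: s' => q = p \/ inlist p s' end.

Definition compact_con (th : brel) : Prop :=
  is_congruence th /\
  exists s : seq (A * A), eqrel th (Cg_set (fun x y => inlist (x, y) s)).

Definition catv (n k : nat) (a : 'I_n -> A) (c : 'I_k -> A) : 'I_(n + k) -> A :=
  fun i => match split i with inl j => a j | inr j => c j end.

Definition TC (al be mu : brel) : Prop :=
  forall (n k : nat) (t : term sg (n + k)) (a b : 'I_n -> A) (c d : 'I_k -> A),
    (forall i, al (a i) (b i)) -> (forall j, be (c j) (d j)) ->
    (mu (eval (catv a c) t) (eval (catv a d) t) <->
     mu (eval (catv b c) t) (eval (catv b d) t)).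

Definition comm (al be : brel) : brel :=
  fun x y => forall mu, is_congruence mu -> TC al be mu -> mu x y.

Definition comm_distributive : Prop :=
  forall al be ga, is_congruence al -> is_congruence be -> is_congruence ga ->
    eqrel (comm (cjoin al be) ga) (cjoin (comm al ga) (comm be ga)) /\
    eqrel (comm ga (cjoin al be)) (cjoin (comm ga al) (comm ga be)).

Definition is_prime (phi : brel) : Prop :=
  is_congruence phi /\ ~ eqrel phi nablaA /\
  forall al be, is_congruence al -> is_congruence be ->
    subrel (comm al be) phi -> subrel al phi \/ subrel be phi.

Definition V (th : brel) (phi : brel) : Prop := is_prime phi /\ subrel th phi.

Definition m_system (S : brel) : Prop :=
  forall a b c d, S a b -> S c d ->
    exists x y, comm (Cg a b) (Cg c d) x y /\ S x y.

Definition disjoint_rel (S th : brel) : Prop := forall x y, S x y -> ~ th x y.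

Definition compl_rel (phi : brel) : brel := fun x y => ~ phi x y.

Definition minimal_in (P : brel -> Prop) (r : brel) : Prop :=
  P r /\ forall s, P s -> subrel s r -> subrel r s.

Definition maximal_in (P : brel -> Prop) (r : brel) : Prop :=
  P r /\ forall s, P s -> subrel r s -> subrel s r.

End Congruences.

(* For a prime congruence phi the complement nabla \ phi is an m-system
   (Cg(a,b), Cg(c,d) not below phi forces [Cg(a,b),Cg(c,d)] not below phi).
   Conversely, if S is a nonempty m-system and psi is a congruence maximal
   among those containing theta and disjoint from S, then psi is prime: for
   alpha, beta not below psi, psi \/ alpha and psi \/ beta meet S in pairs
   whose generated congruences have a commutator meeting S, while by
   distributivity [psi \/ alpha, psi \/ beta] stays below psi \/ [alpha,beta].
   Such maximal congruences exist by Zorn's lemma, since the union of a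
   nonempty chain of congruences is a congruence (operations are finitary). *)
From Pilot Require Import Defs.
From mathcomp Require Import all_boot.
From mathcomp Require Import boolp classical_sets.
From Stdlib Require Import Classical.
(* Re-import so that [subrel] refers to relations on algebras, not ssrbool's. *)
Import Pilot.Defs.

Set Implicit Arguments.
Unset Strict Implicit.
Unset Printing Implicit Defensive.

Section CommutatorTheory.
Variables (sg : signature) (A : algebra sg).
Implicit Types (S r mu al be ga th psi phi : brel A).

Lemma Cg_set_congruence S : is_congruence (Cg_set S).
Proof.
split; [|split; [|split]].
- by move=> x mu [refl _] _; apply: refl.
- move=> x y Hxy mu hmu hS; case: (hmu) => _ [sym _].
  by apply: sym; apply: Hxy.
- move=> x y z Hxy Hyz mu hmu hS; case: (hmu) => _ [_ [trans _]].
  exact: trans (Hxy mu hmu hS) (Hyz mu hmu hS).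
- move=> f u v Huv mu hmu hS; case: (hmu) => _ [_ [_ compat]].
  by apply: compat => i; apply: Huv.
Qed.

Lemma Cg_set_incl S : subrel S (Cg_set S).
Proof. by move=> x y Hxy mu _ hS; apply: hS. Qed.

Lemma Cg_set_min S mu : is_congruence mu -> subrel S mu -> subrel (Cg_set S) mu.
Proof. by move=> hmu hS x y Hxy; apply: Hxy. Qed.

Lemma Cg_min a b mu : is_congruence mu -> mu a b -> subrel (Cg a b) mu.
Proof. by move=> hmu hab; apply: Cg_set_min => // x y [-> ->]. Qed.

Lemma eval_congruence mu n (t : term sg n) (v w : 'I_n -> A) :
  is_congruence mu -> (forall i, mu (v i) (w i)) -> mu (eval v t) (eval w t).
Proof.
move=> [_ [_ [_ compat]]] Hvw; elim: t => [i|f ts IH] /=; first exact: Hvw.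
by apply: compat => j; apply: IH.
Qed.

Lemma catv_related r n k (a b : 'I_n -> A) (c d : 'I_k -> A) :
  (forall i, r (a i) (b i)) -> (forall j, r (c j) (d j)) ->
  forall i, r (catv a c i) (catv b d i).
Proof. by move=> Hab Hcd i; rewrite /catv; case: (split i). Qed.

(* [alpha, beta] <= beta: beta satisfies C(alpha, beta; beta). *)
Lemma comm_sub_r al be : is_congruence be -> subrel (comm al be) be.
Proof.
move=> hbe x y Hxy; apply: Hxy => // n k t a b c d _ Hcd.
have refl : forall z, be z z by case: hbe.
by split=> _; apply: eval_congruence => //; apply: catv_related.
Qed.

(* [alpha, beta] <= alpha: alpha satisfies C(alpha, beta; alpha). *)
Lemma comm_sub_l al be : is_congruence al -> subrel (comm al be) al.
Proof.
move=> hal x y Hxy; apply: Hxy => // n k t a b c d Hab _.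
have [refl [sym [trans _]]] := hal.
have Ec : al (eval (catv a c) t) (eval (catv b c) t).
  by apply: eval_congruence => //; apply: catv_related.
have Ed : al (eval (catv a d) t) (eval (catv b d) t).
  by apply: eval_congruence => //; apply: catv_related.
split=> H.
- exact: trans (sym _ _ Ec) (trans _ _ _ H Ed).
- exact: trans Ec (trans _ _ _ H (sym _ _ Ed)).
Qed.

Lemma comm_mono al al' be be' :
  subrel al al' -> subrel be be' -> subrel (comm al be) (comm al' be').
Proof.
move=> Hal Hbe x y Hxy mu hmu hTC; apply: Hxy => // n k t a b c d Hab Hcd.
by apply: hTC => i; [apply: Hal | apply: Hbe].
Qed.

Lemma comm_join_below psi al be : comm_distributive A ->
  is_congruence psi -> is_congruence al -> is_congruence be ->
  subrel (comm al be) psi -> subrel (comm (cjoin psi al) (cjoin psi be)) psi.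
Proof.
move=> hdistr hpsi hal hbe Hab.
have [Dl _] := hdistr psi al (cjoin psi be) hpsi hal (Cg_set_congruence _).
have [_ Dr] := hdistr psi be al hpsi hbe hal.
move=> x y /Dl; apply: Cg_set_min => // u v [Hpsi | Hal'].
  exact: comm_sub_l Hpsi.
move: Hal' => /Dr; apply: Cg_set_min => // u' v' [Hpsi | Hbe'].
  exact: comm_sub_r Hpsi.
exact: Hab.
Qed.

Lemma prime_compl_m_system phi : is_prime phi -> m_system (compl_rel phi).
Proof.
move=> [_ [_ hprime]] a b c d Hab Hcd.
have Hcomm : ~ subrel (comm (Cg a b) (Cg c d)) phi.
  move=> /(hprime _ _ (Cg_set_congruence _) (Cg_set_congruence _)) [H | H].
  - by apply: Hab; apply: H; apply: Cg_set_incl.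
  - by apply: Hcd; apply: H; apply: Cg_set_incl.
apply: NNPP => Hno; apply: Hcomm => x y Hxy; apply: NNPP => Hphi.
by apply: Hno; exists x, y.
Qed.

Lemma prime_compl_nonempty phi : is_prime phi -> exists x y, compl_rel phi x y.
Proof.
move=> [_ [Hproper _]]; apply: NNPP => Hno; apply: Hproper => x y.
by split=> // _; apply: NNPP => Hxy; apply: Hno; exists x, y.
Qed.

Definition avoiding th S psi : Prop :=
  is_congruence psi /\ subrel th psi /\ disjoint_rel S psi.

Definition maximal_avoiding th S psi : Prop :=
  avoiding th S psi /\
  forall psi', avoiding th S psi' -> subrel psi psi' -> subrel psi' psi.

Lemma maximal_avoiding_join_meets th S psi ga :
  maximal_avoiding th S psi -> is_congruence ga -> ~ subrel ga psi ->
  exists a b, S a b /\ cjoin psi ga a b.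
Proof.
move=> [[_ [Hth _]] Hmax] hga Hga; apply: NNPP => Hno; apply: Hga => x y Hxy.
have Hjoin : subrel (cjoin psi ga) psi.
  apply: Hmax.
  - split; first exact: Cg_set_congruence.
    split=> [u v Huv | u v Huv Hj]; first by apply: Cg_set_incl; left; apply: Hth.
    by apply: Hno; exists u, v.
  - by move=> u v Huv; apply: Cg_set_incl; left.
by apply: Hjoin; apply: Cg_set_incl; right.
Qed.

Lemma maximal_avoiding_prime th S psi : comm_distributive A ->
  m_system S -> (exists a b, S a b) -> maximal_avoiding th S psi -> is_prime psi.
Proof.
move=> hdistr hS [a0 [b0 HS0]] Hmax.
have [[hpsi [_ Hdisj]] _] := Hmax.
split; first exact: hpsi.
split; first by move=> E; apply: (Hdisj _ _ HS0); apply/E.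
move=> al be hal hbe Hab; apply: NNPP => Hno.
have [Hal Hbe] : ~ subrel al psi /\ ~ subrel be psi by tauto.
have [a [b [Sab Jab]]] := maximal_avoiding_join_meets Hmax hal Hal.
have [c [d [Scd Jcd]]] := maximal_avoiding_join_meets Hmax hbe Hbe.
have [x [y [Cxy Sxy]]] := hS _ _ _ _ Sab Scd.
apply: (Hdisj _ _ Sxy); apply: (comm_join_below hdistr hpsi hal hbe Hab).
apply: comm_mono Cxy; apply: Cg_min => //; exact: Cg_set_congruence.
Qed.

Lemma chain_finite_bound (C : set (brel A)) r0 n (u v : 'I_n -> A) :
  C r0 -> total_on C (@subrel _ A) -> (forall i, exists2 r, C r & r (u i) (v i)) ->
  exists2 r, C r & forall i, r (u i) (v i).
Proof.
move=> Cr0 Ctot Huv.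
suff Hseq : forall s : seq 'I_n,
    exists2 r, C r & forall i, i \in s -> r (u i) (v i).
  have [r Cr Hr] := Hseq (enum 'I_n).
  by exists r => // i; apply: Hr; rewrite mem_enum.
elim=> [|i s [r Cr Hr]]; first by exists r0.
have [r' Cr' Hr'] := Huv i.
have [Hrr' | Hr'r] := Ctot _ _ Cr Cr'.
- exists r' => // j; rewrite inE => /orP [/eqP -> //| Hj].
  by apply: Hrr'; apply: Hr.
- exists r => // j; rewrite inE => /orP [/eqP -> | Hj]; last exact: Hr.
  by apply: Hr'r.
Qed.

Definition chain_union (C : set (brel A)) : brel A :=
  fun x y => exists2 r, C r & r x y.

Lemma chain_union_congruence (C : set (brel A)) r0 :
  C r0 -> total_on C (@subrel _ A) -> (forall r, C r -> is_congruence r) ->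
  is_congruence (chain_union C).
Proof.
move=> Cr0 Ctot Ccong; split; [|split; [|split]].
- by move=> x; exists r0 => //; case: (Ccong _ Cr0) => refl _; apply: refl.
- move=> x y [r Cr Hr]; exists r => //.
  by case: (Ccong _ Cr) => _ [sym _]; apply: sym.
- move=> x y z [r Cr Hr] [r' Cr' Hr'].
  have [Hrr' | Hr'r] := Ctot _ _ Cr Cr'.
  + exists r' => //; case: (Ccong _ Cr') => _ [_ [trans _]].
    by apply: trans Hr'; apply: Hrr'.
  + exists r => //; case: (Ccong _ Cr) => _ [_ [trans _]].
    by apply: trans Hr _; apply: Hr'r.
- move=> f u v Huv; have [r Cr Hr] := chain_finite_bound Cr0 Ctot Huv.
  by exists r => //; case: (Ccong _ Cr) => _ [_ [_ compat]]; apply: compat.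
Qed.

Lemma chain_union_avoiding th S (C : set (brel A)) r0 :
  C r0 -> total_on C (@subrel _ A) -> (forall r, C r -> avoiding th S r) ->
  avoiding th S (chain_union C).
Proof.
move=> Cr0 Ctot Cavoid.
split; first by apply: (chain_union_congruence Cr0) => // r /Cavoid [].
split=> [x y Hxy | x y HS [r Cr Hr]].
- by exists r0 => //; have [_ [Hth _]] := Cavoid _ Cr0; apply: Hth.
- by have [_ [_ Hdisj]] := Cavoid _ Cr; exact: Hdisj HS Hr.
Qed.

Lemma exists_maximal_avoiding th S :
  is_congruence th -> disjoint_rel S th -> exists psi, maximal_avoiding th S psi.
Proof.
move=> hth Hdisj.
pose T := {psi | avoiding th S psi}.
pose R (p q : T) := `[< subrel (sval p) (sval q) >].
have avoid_th : avoiding th S th by split=> //; split.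
have [[psi Hpsi] Hmax] : exists t, premaximal R t.
  apply: (ZL_preorder (exist _ th avoid_th)).
  - by move=> p; apply/asboolP.
  - move=> p q r /asboolP Hpq /asboolP Hqr; apply/asboolP => x y Hxy.
    by apply: Hqr; apply: Hpq.
  move=> D Dtot; have [[p0 Dp0] | Dempty] := classic (exists p, D p); last first.
    by exists (exist _ th avoid_th) => p Dp; exfalso; apply: Dempty; exists p.
  pose C := (sval @` D)%classic.
  have Ctot : total_on C (@subrel _ A).
    move=> _ _ [p Dp <-] [q Dq <-].
    by have [/asboolP | /asboolP] := Dtot _ _ Dp Dq; [left | right].
  have Uavoid : avoiding th S (chain_union C).
    by apply: (@chain_union_avoiding _ _ C (sval p0)) => // [|_ [p _ <-]];
      [exists p0 | case: p].
  exists (exist _ (chain_union C) Uavoid) => p Dp; apply/asboolP => x y Hxy.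
  by exists (sval p) => //; exists p.
exists psi; split=> // psi' Hpsi' Hsub.
by move: (Hmax (exist _ psi' Hpsi')) => /(_ (introT (asboolP _) Hsub)) /asboolP.
Qed.

Lemma minimal_prime_compl_maximal th phi : comm_distributive A ->
  is_congruence th -> minimal_in (V th) phi ->
  maximal_in (fun S => m_system S /\ disjoint_rel S th) (compl_rel phi).
Proof.
move=> hdistr hth [[hphi Hth] Hmin].
split; first by split; [exact: prime_compl_m_system | move=> x y Hxy /Hth].
move=> S [hS Hdisj] Hcompl.
have [psi Hmax] := exists_maximal_avoiding hth Hdisj.
have [[_ [Hthpsi HdisjS]] _] := Hmax.
have Hnonempty : exists a b, S a b.
  by have [a [b Hab]] := prime_compl_nonempty hphi; exists a, b; apply: Hcompl.
have hpsi := maximal_avoiding_prime hdistr hS Hnonempty Hmax.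
have Hpsiphi : subrel psi phi.
  by move=> u v Huv; apply: NNPP => Hphi; exact: HdisjS _ _ (Hcompl _ _ Hphi) Huv.
move=> x y HSxy Hphi.
exact: HdisjS _ _ HSxy (Hmin psi (conj hpsi Hthpsi) Hpsiphi x y Hphi).
Qed.

Lemma compl_maximal_minimal_prime th phi : V th phi ->
  maximal_in (fun S => m_system S /\ disjoint_rel S th) (compl_rel phi) ->
  minimal_in (V th) phi.
Proof.
move=> Vphi [_ Hmax]; split=> // psi [hpsi Hth] Hpsiphi.
have Hsub : subrel (compl_rel phi) (compl_rel psi).
  by move=> x y Hphi Hpsi; apply: Hphi; apply: Hpsiphi.
have HpsiS : m_system (compl_rel psi) /\ disjoint_rel (compl_rel psi) th.
  by split; [exact: prime_compl_m_system | move=> x y Hpsi /Hth].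
move=> x y Hphi; apply: NNPP => Hpsi.
exact: Hmax _ HpsiS Hsub x y Hpsi Hphi.
Qed.

End CommutatorTheory.

Theorem mainTheorem7 (sg : signature) (A : algebra sg)
  (hnabla : compact_con (@nablaA sg A))
  (hdistr : comm_distributive A)
  (theta phi : brel A) (htheta : is_congruence theta) (hphi : V theta phi) :
  minimal_in (V theta) phi <->
  maximal_in (fun S => m_system S /\ disjoint_rel S theta) (compl_rel phi).
Proof.
split.
- exact: minimal_prime_compl_maximal.
- exact: compl_maximal_minimal_prime.
Qed.
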